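(* Let $a,b\in\mathbb Q$ with $a,b>0$ such that the quaternion algebra $D=\left(\frac{a,b}{\mathbb Q}\right)$ (generators $i,j$, relations $i^2=a$, $j^2=b$, $ij=-ji$) is a division algebra, with the involution $\ast$ determined by $i^\ast=i$, $j^\ast=j$. Let $K=\mathbb Q(i)$ (on which $\ast$ is the identity), and let $N_1,N_2$ be the positive cones of the two orderings of $K\cong\mathbb Q(\sqrt a)$, with $i\in N_1$ and $-i\in N_2$. Then: (i) $b\in N_1\cap N_2$, but neither $N_1$ nor $N_2$ is of the form $M\cap K$ for a unital hermitian cone $M$ on $(D,\ast)$; (ii) with respect to the right $K$-basis $1,j$ of $D$, left regular representation $\lambda\colon D\to M_2(K)$, $A=\mathrm{diag}(1,b)$ and $X^\#=A^{-1}X^{T}A$, there exist two distinct unital hermitian cones $L_1\neq L_2$ on $(M_2(K),\#)$ with $\lambda^{-1}(L_1)=\lambda^{-1}(L_2)$.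
   Context: A unital hermitian cone on a ring $R$ with involution $\ast$ is a subset $M\subseteq\{r:r^\ast=r\}$ with $1\in M$, $M+M\subseteq M$, $aMa^\ast\subseteq M$ for all $a\in R$, and $M\cap-M=\{0\}$. The left regular representation is defined by $de_\tau=\sum_\sigma e_\sigma\lambda(d)_{\sigma\tau}$ for the basis $(e_1,e_2)=(1,j)$. *)

From HB Require Import structures.
From mathcomp Require Import all_boot all_order all_algebra.
Set Implicit Arguments. Unset Strict Implicit. Unset Printing Implicit Defensive.
Import Order.TTheory GRing.Theory Num.Theory.
Local Open Scope ring_scope.

Record InvRing := {
  carrier :> Type;
  r0 : carrier; r1 : carrier;
  radd : carrier -> carrier -> carrier;
  rmul : carrier -> carrier -> carrier;
  ropp : carrier -> carrier;
  rstar : carrier -> carrier }.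

Definition herm_cone (R : InvRing) (M : R -> Prop) : Prop :=
  (forall r, M r -> rstar r = r) /\
  M (r1 R) /\
  (forall x y, M x -> M y -> M (radd x y)) /\
  (forall c r, M r -> M (rmul (rmul c r) (rstar c))) /\
  (forall r, M r -> M (ropp r) -> r = r0 R).
Arguments herm_cone : clear implicits.

(* x0 + x1 i + x2 j + x3 ij, with i^2 = a, j^2 = b, ij = -ji. *)
Record quat := mkQ { q0 : rat; q1 : rat; q2 : rat; q3 : rat }.

Definition qzero := mkQ 0 0 0 0.
Definition qone := mkQ 1 0 0 0.
Definition qadd (x y : quat) :=
  mkQ (q0 x + q0 y) (q1 x + q1 y) (q2 x + q2 y) (q3 x + q3 y).
Definition qopp (x : quat) := mkQ (- q0 x) (- q1 x) (- q2 x) (- q3 x).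
Definition qmul (a b : rat) (x y : quat) :=
  mkQ (q0 x * q0 y + a * q1 x * q1 y + b * q2 x * q2 y - a * b * q3 x * q3 y)
      (q0 x * q1 y + q1 x * q0 y - b * q2 x * q3 y + b * q3 x * q2 y)
      (q0 x * q2 y + q2 x * q0 y + a * q1 x * q3 y - a * q3 x * q1 y)
      (q0 x * q3 y + q3 x * q0 y + q1 x * q2 y - q2 x * q1 y).
(* the involution with i* = i, j* = j, hence (ij)* = ji = -ij *)
Definition qstar (x : quat) := mkQ (q0 x) (q1 x) (q2 x) (- q3 x).

Definition qi := mkQ 0 1 0 0.
Definition qj := mkQ 0 0 1 0.

Definition Dring (a b : rat) : InvRing :=
  {| carrier := quat; r0 := qzero; r1 := qone; radd := qadd;
     rmul := qmul a b; ropp := qopp; rstar := qstar |}.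

Definition is_division (a b : rat) : Prop :=
  forall x : quat, x <> qzero -> exists y, qmul a b x y = qone /\ qmul a b y x = qone.

Definition inK (x : quat) : Prop := q2 x = 0 /\ q3 x = 0.

Definition ordering_cone_K (a b : rat) (P : quat -> Prop) : Prop :=
  (forall x, P x -> inK x) /\
  (forall x y, P x -> P y -> P (qadd x y)) /\
  (forall x y, P x -> P y -> P (qmul a b x y)) /\
  (forall x, inK x -> P x \/ P (qopp x)) /\
  (forall x, P x -> P (qopp x) -> x = qzero).

Record fK := mkK { k0 : rat; k1 : rat }.
Definition kzero := mkK 0 0.
Definition kone := mkK 1 0.
Definition kadd (x y : fK) := mkK (k0 x + k0 y) (k1 x + k1 y).
Definition kopp (x : fK) := mkK (- k0 x) (- k1 x).
Definition kmul (a : rat) (x y : fK) :=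
  mkK (k0 x * k0 y + a * k1 x * k1 y) (k0 x * k1 y + k1 x * k0 y).
Definition kconst (c : rat) := mkK c 0.
Definition kconj (x : fK) := mkK (k0 x) (- k1 x).

Record M2 := mkM { m11 : fK; m12 : fK; m21 : fK; m22 : fK }.
Definition mzero := mkM kzero kzero kzero kzero.
Definition mone := mkM kone kzero kzero kone.
Definition madd (X Y : M2) :=
  mkM (kadd (m11 X) (m11 Y)) (kadd (m12 X) (m12 Y))
      (kadd (m21 X) (m21 Y)) (kadd (m22 X) (m22 Y)).
Definition mopp (X : M2) := mkM (kopp (m11 X)) (kopp (m12 X)) (kopp (m21 X)) (kopp (m22 X)).
Definition mmul (a : rat) (X Y : M2) :=
  mkM (kadd (kmul a (m11 X) (m11 Y)) (kmul a (m12 X) (m21 Y)))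
      (kadd (kmul a (m11 X) (m12 Y)) (kmul a (m12 X) (m22 Y)))
      (kadd (kmul a (m21 X) (m11 Y)) (kmul a (m22 X) (m21 Y)))
      (kadd (kmul a (m21 X) (m12 Y)) (kmul a (m22 X) (m22 Y))).
Definition mtr (X : M2) := mkM (m11 X) (m21 X) (m12 X) (m22 X).
Definition matA (b : rat) := mkM kone kzero kzero (kconst b).
Definition matAinv (b : rat) := mkM kone kzero kzero (kconst b^-1).
Definition msharp (a b : rat) (X : M2) := mmul a (mmul a (matAinv b) (mtr X)) (matA b).

Definition M2ring (a b : rat) : InvRing :=
  {| carrier := M2; r0 := mzero; r1 := mone; radd := madd;
     rmul := mmul a; ropp := mopp; rstar := msharp a b |}.

(* Left regular representation w.r.t. the right K-basis (e1,e2) = (1, j):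
   d e_tau = sum_sigma e_sigma lambda(d)_{sigma tau}.
   Writing d = alpha + j beta with alpha = x0 + x1 i, beta = x2 - x3 i
   (since j(x2 - x3 i) = x2 j + x3 ij), and using j gamma = conj(gamma) j, j^2 = b:
     d * 1 = 1 alpha + j beta,   d * j = 1 (b conj beta) + j conj alpha. *)
Definition lam (b : rat) (d : quat) : M2 :=
  let alpha := mkK (q0 d) (q1 d) in
  let beta := mkK (q2 d) (- q3 d) in
  mkM alpha (mkK (b * q2 d) (b * q3 d)) (* = b * conj beta *) beta (kconj alpha).

From mathcomp Require Import all_boot all_order all_algebra ring.
From mathcomp.real_closed Require Import realalg.
Set Implicit Arguments. Unset Strict Implicit. Unset Printing Implicit Defensive.
Import Order.TTheory GRing.Theory Num.Theory.
Local Open Scope ring_scope.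

(* (i) An ordering N of K contains every square, hence every positive rational,
   in particular b.  If N were M ∩ K for a hermitian cone M on D, then M
   would contain ±i (whichever of i, -i lies in N) and b(±i), while
   conjugation by j gives j(±i)j* = -b(±i) ∈ M; so b(±i) = 0, absurd.

   (ii) For each real square root t of a, the embedding φ_t : K -> R
   (x0 + x1 i |-> x0 + x1 t) into a real closed field turns X ∈ M_2(K) into
   the quadratic form v |-> v^T A φ_t(X) v on R^2.  The #-symmetric X whose form
   is positive semidefinite make up a unital hermitian cone L_t (the
   conjugation X |-> C X C^# is a linear change of variables of the form;
   antisymmetry uses that φ_t is injective, i.e. that a is not a square, which
   follows from D being a division algebra).  The matrix diag(i,0) separates
   L_t from L_{-t}, whereas on λ(D) the substitution v |-> (√b v2, v1/√b)
   turns the form for t into the form for -t, so λ^{-1}(L_t) = λ^{-1}(L_{-t}). *)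

(* Expands the componentwise definitions of D, K and M_2(K) down to rational
   (or real) coordinates; call-by-value keeps nested matrix products small. *)
Ltac expand_coords :=
  cbv beta iota zeta delta [qadd qopp qmul qstar qi qj qzero qone q0 q1 q2 q3
    kadd kopp kmul kconst kconj kone kzero k0 k1
    madd mopp mmul mtr matA matAinv msharp mzero mone m11 m12 m21 m22 lam].

Definition qscalar (c : rat) : quat := mkQ c 0 0 0.

Lemma qscalar_add (x y : rat) : qadd (qscalar x) (qscalar y) = qscalar (x + y).
Proof. by rewrite /qscalar; expand_coords; congr mkQ; ring. Qed.

Lemma qscalar_mul a b (x y : rat) :
  qmul a b (qscalar x) (qscalar y) = qscalar (x * y).
Proof. by rewrite /qscalar; expand_coords; congr mkQ; ring. Qed.

Lemma qmulA a b x y z : qmul a b x (qmul a b y z) = qmul a b (qmul a b x y) z.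
Proof.
by case: x y z => [x0 x1 x2 x3] [y0 y1 y2 y3] [z0 z1 z2 z3]; expand_coords;
  congr mkQ; ring.
Qed.

Lemma j_conj_imaginary a b (u : rat) :
  qmul a b (qmul a b qj (mkQ 0 u 0 0)) (qstar qj)
  = qopp (qmul a b (qscalar b) (mkQ 0 u 0 0)).
Proof. by rewrite /qscalar; expand_coords; congr mkQ; ring. Qed.

Section OrderingsOfK.
Variables (a b : rat) (N : quat -> Prop).
Hypothesis N_ordering : ordering_cone_K a b N.

Lemma ordering_zero : N qzero.
Proof.
have [_ [_ [_ [N_total _]]]] := N_ordering.
have qzero_in_K : inK qzero by [].
by case: (N_total _ qzero_in_K).
Qed.

(* Squares of elements of K are positive: x^2 = (-x)^2. *)
Lemma ordering_sq x : inK x -> N (qmul a b x x).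
Proof.
have [_ [_ [N_mul [N_total _]]]] := N_ordering.
move=> x_in_K; case: (N_total x x_in_K) => Nx; first exact: N_mul.
have -> : qmul a b x x = qmul a b (qopp x) (qopp x).
  by case: x {x_in_K Nx} => x0 x1 x2 x3; expand_coords; congr mkQ; ring.
exact: N_mul.
Qed.

(* Natural numbers are sums of 1 = 1^2. *)
Lemma ordering_nat (n : nat) : N (qscalar n%:R).
Proof.
have [_ [N_add _]] := N_ordering.
elim: n => [|n IHn]; first exact: ordering_zero.
rewrite -addn1 natrD -(mulr1 1) -qscalar_add -(qscalar_mul a b).
by apply: N_add => //; apply: ordering_sq.
Qed.

(* A positive rational c = n/d equals (n d) (1/d)^2 with n d ∈ ℕ. *)
Lemma ordering_pos_rat c : 0 < c -> N (qscalar c).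
Proof.
have [_ [_ [N_mul _]]] := N_ordering.
move=> c_gt0; pose d : rat := (denq c)%:~R.
have d_neq0 : d != 0 by rewrite intr_eq0 denq_neq0.
pose m := absz (numq c * denq c).
have Em : m%:R = c * d * d.
  rewrite pmulrn abszE ger0_norm ?mulr_ge0 ?numq_ge0 ?ltW ?denq_gt0 //.
  by rewrite intrM numqE.
have -> : c = m%:R * (d^-1 * d^-1) by rewrite Em; field.
rewrite -!(qscalar_mul a b); apply: N_mul; first exact: ordering_nat.
exact: ordering_sq.
Qed.

End OrderingsOfK.

Lemma ordering_not_hermitian a b (N : quat -> Prop) :
  0 < b -> ordering_cone_K a b N ->
  ~ (exists M : quat -> Prop, herm_cone (Dring a b) M /\
       (forall x, N x <-> (M x /\ inK x))).
Proof.
move=> b_gt0 N_ordering [M [[_ [_ [_ [M_conj M_anti]]]] N_eq]].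
have [_ [_ [N_mul [N_total _]]]] := N_ordering.
have N_M x : N x -> M x by move=> /N_eq [].
have Nb := ordering_pos_rat N_ordering b_gt0.
have [u [u_neq0 Nui]] : exists u : rat, u != 0 /\ N (mkQ 0 u 0 0).
  have qi_in_K : inK qi by [].
  case: (N_total qi qi_in_K) => Ni; first by exists 1.
  by exists (-1); rewrite oppr_eq0 oner_eq0.
set y := qmul a b (qscalar b) (mkQ 0 u 0 0).
have My : M y by apply/N_M/N_mul.
have Mmy : M (qopp y).
  by rewrite -j_conj_imaginary; apply: (M_conj qj); apply: N_M.
have y_eq0 : y = qzero := M_anti y My Mmy.
have : b * u = 0.
  by rewrite -[RHS](f_equal q1 y_eq0) /y /qscalar; expand_coords; ring.
by apply/eqP; rewrite mulf_neq0 // gt_eqF.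
Qed.

(* In a division algebra D, a is not a square in Q: otherwise
   (r - i)(r + i) = r^2 - a = 0 with r + i invertible. *)
Lemma division_a_not_square a b r : is_division a b -> a <> r * r.
Proof.
move=> D_div a_sq; pose x := mkQ r 1 0 0; pose y := mkQ r (-1) 0 0.
have x_neq0 : x <> qzero by move=> /(f_equal q1) /eqP; rewrite oner_eq0.
have [z [xz1 _]] := D_div x x_neq0.
have yx0 : qmul a b y x = qzero by rewrite /x /y a_sq; expand_coords; congr mkQ; ring.
have y0 : y = qzero.
  have -> : y = qmul a b y (qmul a b x z).
    by rewrite xz1 /y; expand_coords; congr mkQ; ring.
  by rewrite qmulA yx0; case: z {xz1} => z0 z1 z2 z3; expand_coords; congr mkQ; ring.
by move/(f_equal q1)/eqP: y0; rewrite oppr_eq0 oner_eq0.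
Qed.

Section Sharp.
Variables (a b : rat).
Hypothesis b_neq0 : b != 0.

Lemma msharp_add X Y : msharp a b (madd X Y) = madd (msharp a b X) (msharp a b Y).
Proof.
case: X Y => [[x0 x1] [y0 y1] [z0 z1] [w0 w1]] [[x0' x1'] [y0' y1'] [z0' z1'] [w0' w1']].
by expand_coords; congr mkM; congr mkK; field.
Qed.

Lemma msharp_mul X Y : msharp a b (mmul a X Y) = mmul a (msharp a b Y) (msharp a b X).
Proof.
case: X Y => [[x0 x1] [y0 y1] [z0 z1] [w0 w1]] [[x0' x1'] [y0' y1'] [z0' z1'] [w0' w1']].
by expand_coords; congr mkM; congr mkK; field.
Qed.

Lemma msharpK X : msharp a b (msharp a b X) = X.
Proof.
case: X => [[x0 x1] [y0 y1] [z0 z1] [w0 w1]].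
by expand_coords; congr mkM; congr mkK; field.
Qed.

Lemma msharp_one : msharp a b mone = mone.
Proof. by expand_coords; congr mkM; congr mkK; field. Qed.

Lemma m12_msharp X : m12 (msharp a b X) = kmul a (kconst b) (m21 X).
Proof. by case: X => [x y [z0 z1] w]; expand_coords; congr mkK; field. Qed.

End Sharp.

Lemma mmulA a X Y Z : mmul a X (mmul a Y Z) = mmul a (mmul a X Y) Z.
Proof.
case: X Y Z => [[x0 x1] [y0 y1] [z0 z1] [w0 w1]]
  [[x0' x1'] [y0' y1'] [z0' z1'] [w0' w1']] [[x0'' x1''] [y0'' y1''] [z0'' z1''] [w0'' w1'']].
by expand_coords; congr mkM; congr mkK; ring.
Qed.

Section Embedding.
Variables (R : realFieldType) (t : R).

Definition embK (x : fK) : R := ratr (k0 x) + ratr (k1 x) * t.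

Lemma embK_add x y : embK (kadd x y) = embK x + embK y.
Proof. by rewrite /embK; expand_coords; ring. Qed.

Lemma embK_opp x : embK (kopp x) = - embK x.
Proof. by rewrite /embK; expand_coords; ring. Qed.

Lemma embK_const c : embK (kconst c) = ratr c.
Proof. by rewrite /embK; expand_coords; ring. Qed.

Lemma embK_mul a x y : t * t = ratr a -> embK (kmul a x y) = embK x * embK y.
Proof.
move=> t_sq; have -> : embK x * embK y = ratr (k0 x * k0 y)
    + ratr (k1 x * k1 y) * (t * t) + ratr (k0 x * k1 y + k1 x * k0 y) * t.
  by rewrite /embK; ring.
by rewrite t_sq /embK; expand_coords; ring.
Qed.

Lemma embK_inj a : t * t = ratr a -> (forall r, a <> r * r) ->
  forall x, embK x = 0 -> x = kzero.
Proof.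
move=> t_sq a_nsq [x0 x1]; rewrite /embK /=.
have [-> | x1_neq0] := eqVneq x1 0.
  by rewrite rmorph0 mul0r addr0 => /eqP; rewrite fmorph_eq0 => /eqP ->.
move=> emb0; exfalso; apply: (a_nsq (- x0 / x1)).
have t_rat : t = ratr (- x0 / x1).
  transitivity ((ratr x0 + ratr x1 * t - ratr x0) / ratr x1).
    by field; rewrite fmorph_eq0.
  by rewrite emb0 fmorph_div rmorphN sub0r.
by move: t_sq; rewrite t_rat -rmorphM => /eqP; rewrite fmorph_eq => /eqP <-.
Qed.

End Embedding.

Section QuadraticFormCone.
Variables (R : realFieldType) (a b : rat) (t : R).

Definition formA (X : M2) (v1 v2 : R) : R :=
  embK t (m11 X) * v1 * v1 + (embK t (m12 X) + ratr b * embK t (m21 X)) * v1 * v2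
  + ratr b * embK t (m22 X) * v2 * v2.

Definition psd_cone (X : M2) : Prop :=
  msharp a b X = X /\ forall v1 v2 : R, 0 <= formA X v1 v2.

Lemma formA_add X Y v1 v2 : formA (madd X Y) v1 v2 = formA X v1 v2 + formA Y v1 v2.
Proof. by rewrite /formA; expand_coords; rewrite !embK_add; ring. Qed.

Lemma formA_opp X v1 v2 : formA (mopp X) v1 v2 = - formA X v1 v2.
Proof. by rewrite /formA; expand_coords; rewrite !embK_opp; ring. Qed.

Hypotheses (b_gt0 : 0 < b) (t_sq : t * t = ratr a).

Let b_neq0 : b != 0. Proof. by rewrite gt_eqF. Qed.
Let bR_gt0 : (0 : R) < ratr b. Proof. by rewrite ltr0q. Qed.

Lemma formA_one v1 v2 : formA mone v1 v2 = v1 * v1 + ratr b * (v2 * v2).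
Proof. by rewrite /formA /embK; expand_coords; ring. Qed.

(* The form of C X C^# is the form of X after the change of variables
   w = A^{-1} φ_t(C)^T A v. *)
Lemma formA_conj C X v1 v2 :
  formA (mmul a (mmul a C X) (msharp a b C)) v1 v2
  = formA X (embK t (m11 C) * v1 + ratr b * embK t (m21 C) * v2)
            (embK t (m12 C) * v1 / ratr b + embK t (m22 C) * v2).
Proof.
rewrite /formA; cbv beta iota delta [mmul msharp mtr matA matAinv m11 m12 m21 m22].
rewrite !(embK_add, embK_mul _ _ t_sq, embK_const) /embK; expand_coords.
by field; rewrite fmorph_eq0.
Qed.

Hypothesis embK_injective : forall x, embK t x = 0 -> x = kzero.

Lemma formA_eq0 X : msharp a b X = X -> (forall v1 v2, formA X v1 v2 = 0) ->
  X = mzero.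
Proof.
move=> X_fixed form0.
have e12 : embK t (m12 X) = ratr b * embK t (m21 X).
  by rewrite -X_fixed m12_msharp // embK_mul // embK_const X_fixed.
have e11 : embK t (m11 X) = 0 by rewrite -(form0 1 0) /formA; ring.
have e22 : embK t (m22 X) = 0.
  apply: (mulfI (lt0r_neq0 bR_gt0)); rewrite mulr0 -(form0 0 1) /formA; ring.
have e21 : embK t (m21 X) = 0.
  apply: (mulfI (lt0r_neq0 (addr_gt0 bR_gt0 bR_gt0))).
  by rewrite mulr0 -(form0 1 1) /formA e11 e22 e12; ring.
move: e12; rewrite e21 mulr0 => e12.
case: X {X_fixed form0} e11 e12 e21 e22 => x11 x12 x21 x22 /=.
by move=> /embK_injective -> /embK_injective -> /embK_injective -> /embK_injective ->.
Qed.

Lemma psd_cone_herm : herm_cone (M2ring a b) psd_cone.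
Proof.
split; first by move=> X [].
split.
  split; first exact: msharp_one.
  move=> v1 v2; rewrite formA_one -!expr2.
  by apply: addr_ge0; [exact: sqr_ge0 | apply: mulr_ge0; [exact: ltW | exact: sqr_ge0]].
split.
  move=> X Y [X_fixed X_ge0] [Y_fixed Y_ge0]; split.
    by rewrite /= msharp_add // X_fixed Y_fixed.
  by move=> v1 v2; rewrite formA_add addr_ge0.
split.
  move=> C X [X_fixed X_ge0]; split => /=.
    by rewrite msharp_mul // msharpK // msharp_mul // X_fixed mmulA.
  by move=> v1 v2; rewrite formA_conj.
move=> X [X_fixed X_ge0] [_ mX_ge0]; apply: formA_eq0 => // v1 v2.
by apply/eqP; rewrite eq_le X_ge0 andbT -oppr_ge0 -formA_opp.
Qed.

End QuadraticFormCone.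

(* On λ(D), the substitution v |-> (β v2, v1/β) with β^2 = b turns the form
   for t into the form for -t: it reflects the K-semilinearity of λ(j). *)
Lemma formA_lam_swap (R : realFieldType) b (t beta : R) d v1 v2 :
  beta * beta = ratr b -> beta != 0 ->
  formA b t (lam b d) v1 v2 = formA b (- t) (lam b d) (beta * v2) (v1 / beta).
Proof.
move=> beta_sq beta_neq0.
have ratr_bM x : ratr (b * x) = beta * beta * ratr x :> R.
  by rewrite beta_sq rmorphM.
rewrite /formA /embK; expand_coords; rewrite !ratr_bM -beta_sq.
by field.
Qed.

Lemma psd_cone_lam_opp (R : realFieldType) a b (t beta : R) d :
  beta * beta = ratr b -> beta != 0 ->
  psd_cone a b t (lam b d) -> psd_cone a b (- t) (lam b d).
Proof.
move=> beta_sq beta_neq0 [lam_fixed lam_ge0]; split => // w1 w2.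
by rewrite (formA_lam_swap (- t) d w1 w2 beta_sq beta_neq0) opprK.
Qed.

(* diag(i, 0) lies in L_t exactly when t >= 0, since its form is t v1^2. *)
Definition imag_diag : M2 := mkM (mkK 0 1) kzero kzero kzero.

Lemma psd_cone_imag_diag (R : realFieldType) a b (t : R) :
  b != 0 -> psd_cone a b t imag_diag <-> 0 <= t.
Proof.
move=> b_neq0.
have form_t v1 v2 : formA b t imag_diag v1 v2 = t * (v1 * v1).
  by rewrite /formA /embK /imag_diag; expand_coords; ring.
split=> [[_ /(_ 1 0)] | t_ge0]; first by rewrite form_t !mulr1.
split; first by rewrite /imag_diag; expand_coords; congr mkM; congr mkK; field.
by move=> v1 v2; rewrite form_t mulr_ge0 // -expr2 sqr_ge0.
Qed.

Theorem mainTheorem16 (a b : rat) (ha : 0 < a) (hb : 0 < b)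
  (hdiv : is_division a b) :
  (* (i): for each ordering N of K (in particular N1 with i in N1, N2 with -i in N2) *)
  (forall N : quat -> Prop, ordering_cone_K a b N ->
     N (mkQ b 0 0 0) /\
     ~ (exists M : quat -> Prop, herm_cone (Dring a b) M /\
          (forall x, N x <-> (M x /\ inK x)))) /\
  (* (ii) *)
  (exists L1 L2 : M2 -> Prop,
     herm_cone (M2ring a b) L1 /\ herm_cone (M2ring a b) L2 /\
     (exists X, ~ (L1 X <-> L2 X)) /\
     (forall d : quat, L1 (lam b d) <-> L2 (lam b d))).
Proof.
split=> [N N_ordering | ].
  split; first exact (ordering_pos_rat N_ordering hb).
  exact: ordering_not_hermitian.
pose t : realalg := Num.sqrt (ratr a); pose beta : realalg := Num.sqrt (ratr b).
have t_gt0 : 0 < t by rewrite sqrtr_gt0 ltr0q.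
have t_sq : t * t = ratr a by rewrite -expr2 sqr_sqrtr // ler0q ltW.
have mt_sq : - t * - t = ratr a by rewrite mulrNN.
have beta_sq : beta * beta = ratr b by rewrite -expr2 sqr_sqrtr // ler0q ltW.
have beta_neq0 : beta != 0 by rewrite gt_eqF // sqrtr_gt0 ltr0q.
have a_nsq r : a <> r * r := @division_a_not_square a b r hdiv.
exists (psd_cone a b t), (psd_cone a b (- t)).
split; first exact: psd_cone_herm hb t_sq (embK_inj t_sq a_nsq).
split; first exact: psd_cone_herm hb mt_sq (embK_inj mt_sq a_nsq).
split.
  have b_neq0 : b != 0 := lt0r_neq0 hb.
  exists imag_diag => -[L_t_opp _].
  have := L_t_opp ((psd_cone_imag_diag a t b_neq0).2 (ltW t_gt0)).
  by move/(psd_cone_imag_diag a (- t) b_neq0); rewrite oppr_ge0 leNgt t_gt0.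
move=> d; split; first exact: psd_cone_lam_opp beta_sq beta_neq0.
by move/(psd_cone_lam_opp beta_sq beta_neq0); rewrite opprK.
Qed.
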